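(* Let $\tau\in[0,1]$ and let $\tilde f,f$ be Gaussian densities on $\mathbb{R}^q$ with means $\tilde m_z,m_z$ and positive definite covariances $\tilde K_z,K_z$. Then $\mathcal{D}_\tau(\tilde f\|f)\ge0$, with equality if and only if $\tilde f=f$.
   Context: $\Delta m_z=\tilde m_z-m_z$, $L_z$ any matrix with $K_z=L_zL_z^T$, $M=L_z^{-1}\tilde K_zL_z^{-T}$, $\|v\|_A^2=v^TAv$, matrix log and powers of positive definite matrices are the usual ones. $\mathcal{D}_0(\tilde f\|f)=\|\Delta m_z\|^2_{K_z^{-1}}+\mathrm{tr}(-\log(\tilde K_zK_z^{-1})+\tilde K_zK_z^{-1}-I_q)$; for $0<\tau<1$, $\mathcal{D}_\tau(\tilde f\|f)=\frac1{1-\tau}\|\Delta m_z\|^2_{K_z^{-1}}+\mathrm{tr}(\frac1{\tau(\tau-1)}M^\tau+\frac1{1-\tau}\tilde K_zK_z^{-1}+\frac1\tau I_q)$; $\mathcal{D}_1(\tilde f\|f)=\delta(\Delta m_z)+\mathrm{tr}(M\log M-\tilde K_zK_z^{-1}+I_q)$, with $\delta(\Delta m_z)=0$ if $\Delta m_z=0$ and $+\infty$ otherwise. *)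

From HB Require Import structures.
From mathcomp Require Import all_boot all_order all_algebra.
From mathcomp Require Import boolp classical_sets reals ereal.
From mathcomp.analysis Require Import sequences exp trigo.
Set Implicit Arguments. Unset Strict Implicit. Unset Printing Implicit Defensive.
Import Order.TTheory GRing.Theory Num.Theory.
Local Open Scope ring_scope.

Section Defs.
Variable R : realType.

Definition posdef (q : nat) (K : 'M[R]_q) : Prop :=
  K^T = K /\ forall x : 'cV[R]_q, x != 0 -> 0 < (x^T *m K *m x) 0 0.

Definition eigdecomp (n : nat) (A : 'M[R]_n) (Pd : 'M[R]_n * 'rV[R]_n) : Prop :=
  Pd.1 \in unitmx /\ A = Pd.1 *m diag_mx Pd.2 *m invmx Pd.1.

(* Default 0 for non-diagonalizable A. *)
Definition matfun (n : nat) (f : R -> R) (A : 'M[R]_n) : 'M[R]_n :=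
  match pselect (exists Pd, eigdecomp A Pd) with
  | left h => let Pd := projT1 (cid h) in
              Pd.1 *m diag_mx (map_mx f Pd.2) *m invmx Pd.1
  | right _ => 0
  end.

Definition mlog (n : nat) (A : 'M[R]_n) : 'M[R]_n := matfun (@ln R) A.
Definition mpow (n : nat) (t : R) (A : 'M[R]_n) : 'M[R]_n :=
  matfun (fun x => powR x t) A.

Definition gauss_pdf (q : nat) (m : 'cV[R]_q) (K : 'M[R]_q) : 'cV[R]_q -> R :=
  fun x => expR (- (1/2) * ((x - m)^T *m invmx K *m (x - m)) 0 0)
           / Num.sqrt ((2 * pi) ^+ q * \det K).

(* D_tau(ft || f), L with K = L L^T *)
Definition Dtau (q : nat) (tau : R) (mt m : 'cV[R]_q) (Kt K L : 'M[R]_q)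
  : \bar R :=
  let dm := mt - m in
  let nrm := (dm^T *m invmx K *m dm) 0 0 in
  let A := Kt *m invmx K in
  let M := invmx L *m Kt *m invmx L^T in
  if tau == 0 then (nrm + \tr (- mlog A + A - 1%:M))%:E
  else if tau < 1 then
    ((1 - tau)^-1 * nrm
     + \tr ((tau * (tau - 1))^-1 *: mpow tau M + (1 - tau)^-1 *: A
            + tau^-1 *: 1%:M))%:E
  else if dm == 0 then (\tr (M *m mlog M - A + 1%:M))%:E
  else +oo%E.

End Defs.

From HB Require Import structures.
From mathcomp Require Import all_boot all_order all_algebra.
From mathcomp Require Import boolp classical_sets reals ereal.
From mathcomp.analysis Require Import sequences exp trigo.
From mathcomp Require Import spectral mxred.
From mathcomp.real_closed Require Import complex.
From mathcomp Require Import ring lra.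
Import Order.TTheory GRing.Theory Num.Theory.
Local Open Scope ring_scope.
Set Implicit Arguments. Unset Strict Implicit. Unset Printing Implicit Defensive.

(** Write [A = Kt K^-1], which is similar to the positive definite matrix
    [M = L^-1 Kt L^-T] and therefore has positive eigenvalues [l_i].  In each
    regime the divergence reads [c |dm|^2_{K^-1} + sum_i g (l_i)] with [c > 0]
    (an indicator of [dm = 0] instead of the first term when [tau = 1]) and
    [g] one of [x - ln x - 1], [(t x + 1 - t - x^t) / (t (1 - t))] and
    [x ln x - x + 1]: each [g] is nonnegative on [(0, +oo)] and vanishes only
    at [1] (the second by weighted AM-GM, the third by the first one at
    [1/x]).  Hence the divergence is nonnegative and vanishes iff [dm = 0] and
    all [l_i = 1], i.e. [A = 1], i.e. [Kt = K].  Finally a Gaussian density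
    determines its parameters: its logarithm is a quadratic polynomial whose
    quadratic part is [- x^T K^-1 x / 2] and which is maximal at the mean. *)

Section RealSpectral.
Variable R : realType.

Lemma realsym_split_annihilator n (S : 'M[R]_n.+1) : S^T = S ->
  exists2 rs : seq R, uniq rs & horner_mx S (\prod_(r <- rs) ('X - r%:P)) = 0.
Proof.
move=> symS; pose f := real_complex R; pose Sc := map_mx f S.
have hermSc : Sc \is hermsymmx.
  apply: realsym_hermsym.
    apply/is_hermitianmxP; rewrite expr0 scale1r.
    by rewrite /Sc map_trmx symS; apply/matrixP => i j; rewrite !mxE.
  by apply/mxOverP => i j; rewrite mxE; apply/complex_realP; exists (S i j).
have /orthomx_spectralP ScE := hermitian_normalmx hermSc.
have /mxOverP sp_real := hermitian_spectral_diag_real hermSc.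
set P := spectralmx Sc in ScE; set sp := spectral_diag Sc in ScE sp_real.
pose rs := undup [seq complex.Re (sp 0 j) | j <- enum 'I_n.+1].
exists rs; first exact: undup_uniq.
apply: (@map_mx_inj _ _ f).
rewrite map_horner_mx map_prod_XsubC map_mx0 -/Sc ScE -[P in _ *m P]invmxK.
rewrite horner_mx_uconj ?unitmx_inv ?spectral_unit // horner_mx_diag.
suff -> : map_mx (horner (\prod_(r <- rs) ('X - (f r)%:P))) sp = 0.
  by rewrite raddf0 mulmx0 mul0mx.
apply/matrixP => i j; rewrite !mxE ord1; apply/eqP.
rewrite -/(root _ _) -(big_map f xpredT (fun x => 'X - x%:P)) root_prod_XsubC.
apply/mapP; exists (complex.Re (sp 0 j)); last by rewrite /f RRe_real ?sp_real.
by rewrite mem_undup; apply/mapP; exists j; rewrite ?mem_enum.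
Qed.

Lemma sym_eigdecomp n (S : 'M[R]_n) : S^T = S -> exists Pd, eigdecomp S Pd.
Proof.
case: n S => [|n] S symS.
  by exists (1%:M, 0); split; [rewrite unitmx1 | apply/matrixP => -[]].
have [rs rs_uniq annS] := realsym_split_annihilator symS.
have [Q Qu] : exists2 Q : 'M_n.+1, Q \in unitmx & similar_diag Q S.
  by apply/diagonalizableP; exists rs => //; exact: mxminpoly_min annS.
move=> /similar_diagPex [D] /(similarLR Qu) SE.
exists (invmx Q, D); split; first by rewrite unitmx_inv.
by rewrite /= SE conjumx ?unitmx_inv // invmxK.
Qed.

End RealSpectral.

Section Eigendecomposition.
Variable R : realType.

Lemma invmx_mul n (A B : 'M[R]_n) : A \in unitmx -> B \in unitmx ->
  invmx (A *m B) = invmx B *m invmx A.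
Proof.
move=> Au Bu; have ABu : A *m B \in unitmx by rewrite unitmx_mul Au.
have inv_r : A *m B *m (invmx B *m invmx A) = 1%:M.
  by rewrite mulmxA mulmxK // mulmxV.
by rewrite -[LHS]mulmx1 -inv_r mulmxA mulVmx // mul1mx.
Qed.

Lemma mxtrace_conj n (P X : 'M[R]_n) : P \in unitmx ->
  \tr (P *m X *m invmx P) = \tr X.
Proof. by move=> Pu; rewrite mxtrace_mulC mulmxA mulVmx // mul1mx. Qed.

Lemma mxtrace_conj_diag n (P : 'M[R]_n) (d : 'rV[R]_n) : P \in unitmx ->
  \tr (P *m diag_mx d *m invmx P) = \sum_i d 0 i.
Proof. by move=> Pu; rewrite mxtrace_conj // mxtrace_diag. Qed.

Lemma mxtrace_conj_diag_map n (P : 'M[R]_n) (d : 'rV[R]_n) (f : R -> R) :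
  P \in unitmx -> \tr (P *m diag_mx (map_mx f d) *m invmx P) = \sum_i f (d 0 i).
Proof.
by move=> Pu; rewrite mxtrace_conj_diag //; apply: eq_bigr => i _; rewrite mxE.
Qed.

Lemma eigdecomp_conj n (U A P : 'M[R]_n) d : U \in unitmx ->
  eigdecomp A (P, d) -> eigdecomp (U *m A *m invmx U) (U *m P, d).
Proof.
move=> Uu [/= Pu ->]; split => /=; first by rewrite unitmx_mul Uu.
by rewrite invmx_mul // !mulmxA.
Qed.

Lemma eigdecomp_eq1 n (A P : 'M[R]_n) d :
  eigdecomp A (P, d) -> (A = 1%:M <-> forall i, d 0 i = 1).
Proof.
move=> [/= Pu ->]; split => [A1 i|d1].
  have : diag_mx d = 1%:M.
    have := congr1 (fun X => invmx P *m X *m P) A1.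
    by rewrite /= mulmx1 mulVmx // !mulmxA mulVmx // mul1mx mulmxKV.
  by move/matrixP/(_ i i); rewrite !mxE eqxx.
have -> : diag_mx d = 1%:M by apply/matrixP => i j; rewrite !mxE d1.
by rewrite mulmx1 mulmxV.
Qed.

Lemma matfunE n (A : 'M[R]_n) : (exists Pd, eigdecomp A Pd) ->
  exists2 Pd, eigdecomp A Pd &
    forall f, matfun f A = Pd.1 *m diag_mx (map_mx f Pd.2) *m invmx Pd.1.
Proof.
rewrite /matfun => exA; case: pselect => [exA'|//].
by exists (projT1 (cid exA')) => //; exact: (projT2 (cid exA')).
Qed.

End Eigendecomposition.

Section PositiveDefinite.
Variable R : realType.

Lemma posdef1 n : posdef (1%:M : 'M[R]_n).
Proof.
split=> [|x xn0]; first exact: trmx1.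
have sqrE k : x^T 0 k * x k 0 = x k 0 ^+ 2 by rewrite mxE expr2.
have sqr_ge0' k : true -> 0 <= x k 0 ^+ 2 by move=> _; exact: sqr_ge0.
rewrite mulmx1 mxE (eq_bigr _ (fun k _ => sqrE k)) lt_def sumr_ge0 ?andbT //.
apply: contra xn0 => /eqP sum0; apply/eqP/matrixP => k j.
by rewrite ord1 mxE; apply/eqP; rewrite -sqrf_eq0 (psumr_eq0P sqr_ge0' sum0).
Qed.

Lemma posdef_congr n (B S : 'M[R]_n) : B \in unitmx -> posdef S ->
  posdef (B^T *m S *m B).
Proof.
move=> Bu [symS posS]; split; first by rewrite !trmx_mul trmxK symS mulmxA.
move=> x xn0; rewrite -!mulmxA mulmxA -trmx_mul mulmxA; apply: posS.
by apply: contra xn0 => /eqP Bx0; rewrite -(mulKmx Bu x) Bx0 mulmx0.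
Qed.

Lemma posdef_unit n (K : 'M[R]_n) : posdef K -> K \in unitmx.
Proof.
move=> [_ posK]; rewrite unitmxE unitfE; apply/det0P => -[v vn0 vK0].
by have := posK v^T; rewrite trmx_eq0 trmxK vK0 mul0mx mxE ltxx => /(_ vn0).
Qed.

Lemma posdef_inv n (K : 'M[R]_n) : posdef K -> posdef (invmx K).
Proof.
move=> posK; have Ku := posdef_unit posK; have [symK _] := posK.
have -> : invmx K = (invmx K)^T *m K *m invmx K.
  by rewrite trmx_inv symK mulVmx // mul1mx.
by apply: posdef_congr; rewrite ?unitmx_inv.
Qed.

(* An eigenvector [v] of [Kt K^-1] for [l] gives [w^T Kt w = l w^T K w] with
   [w = K^-1 v]. *)
Lemma eigdecomp_ratio_gt0 n (Kt K P : 'M[R]_n) d : posdef Kt -> posdef K ->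
  eigdecomp (Kt *m invmx K) (P, d) -> forall i, 0 < d 0 i.
Proof.
move=> [_ posKt] posK [/= Pu AE] i; have Ku := posdef_unit posK.
pose e : 'cV[R]_n := delta_mx i 0; pose w := invmx K *m (P *m e).
have wn0 : w != 0.
  rewrite /w; apply: contraTneq isT => /(congr1 (fun v => invmx P *m (K *m v))).
  rewrite /= mulKVmx // mulKmx // !mulmx0 => /matrixP/(_ i 0).
  by rewrite !mxE !eqxx => /eqP; rewrite oner_eq0.
have Kt_w : Kt *m w = d 0 i *: (K *m w).
  rewrite /w mulKVmx // mulmxA AE -!mulmxA mulKmx // mul_diag_mx scalemxAr.
  congr (P *m _).
  apply/matrixP => a b; rewrite !mxE.
  by case: eqVneq => [->|] //=; rewrite !mulr0.
have := posKt _ wn0; rewrite -mulmxA Kt_w -scalemxAr mxE mulmxA.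
by rewrite pmulr_lgt0 // (proj2 posK).
Qed.

Lemma eigdecomp_ratio_eq1 n (Kt K P : 'M[R]_n) d : posdef K ->
  eigdecomp (Kt *m invmx K) (P, d) -> ((forall i, d 0 i = 1) <-> Kt = K).
Proof.
move=> /posdef_unit Ku /eigdecomp_eq1 <-; split => [A1|->]; last exact: mulmxV.
by rewrite -(mulmxKV Ku Kt) A1 mul1mx.
Qed.

Lemma posdef_det_gt0 n (K : 'M[R]_n) : posdef K -> 0 < \det K.
Proof.
move=> posK; have [[P d] Kd] := sym_eigdecomp (proj1 posK).
have Kd1 : eigdecomp (K *m invmx 1%:M) (P, d) by rewrite invmx1 mulmx1.
have [/= Pu ->] := Kd; rewrite !det_mulmx det_inv det_diag mulrAC divrr.
  rewrite mul1r prodr_gt0 // => i _.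
  exact: eigdecomp_ratio_gt0 posK (posdef1 n) Kd1 i.
by rewrite -unitmxE.
Qed.

End PositiveDefinite.

Section ScalarGenerators.
Variable R : realType.
Implicit Types (f : R -> R) (t x : R).

Definition zero_min_at1 f := forall x, 0 < x -> 0 <= f x /\ (f x = 0 <-> x = 1).

Lemma zero_min_at1_scale c f : 0 < c -> zero_min_at1 f ->
  zero_min_at1 (fun x => c * f x).
Proof.
move=> c_gt0 f_min x x_gt0; have [f_ge0 f_eq0] := f_min x x_gt0.
split; first by rewrite mulr_ge0 // ltW.
rewrite -f_eq0; split=> [/eqP|->]; last exact: mulr0.
by rewrite mulf_eq0 gt_eqF //= => /eqP.
Qed.

Lemma zero_min_at1_ln : zero_min_at1 (fun x => x - ln x - 1).
Proof.
move=> x x_gt0; have x_pos : x \in Num.pos by rewrite posrE.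
have := expR_ge1Dx (ln x); rewrite lnK // => ln_le; split; first lra.
split=> [x_eq|->]; last by rewrite ln1; lra.
apply/eqP; apply: contraT; rewrite -ln_eq0 // => /expR_gt1Dx.
by rewrite lnK //; lra.
Qed.

Lemma zero_min_at1_xlnx : zero_min_at1 (fun x => x * ln x - x + 1).
Proof.
move=> x x_gt0; have x_pos : x \in Num.pos by rewrite posrE.
have xV_gt0 : 0 < x^-1 by rewrite invr_gt0.
have [g_ge0 g_eq0] := zero_min_at1_scale x_gt0 zero_min_at1_ln xV_gt0.
have -> : x * ln x - x + 1 = x * (x^-1 - ln x^-1 - 1).
  by rewrite lnV // !mulrBr mulfV ?gt_eqF // mulrN opprK mulr1; lra.
split=> //; rewrite g_eq0; split=> [/eqP|->]; last exact: invr1.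
by rewrite invr_eq1 => /eqP.
Qed.

(* With [e = x^t] and [y = ln x], [t x + (1 - t) - e] is the sum of
   [t e (x^(1-t) - 1 - (1 - t) y)] and [(1 - t) e (x^(-t) - 1 + t y)], two
   instances of [1 + s <= exp s]. *)
Lemma zero_min_at1_powR t : 0 < t < 1 ->
  zero_min_at1 (fun x => t * x + (1 - t) - powR x t).
Proof.
move=> /andP[t_gt0 t_lt1] x x_gt0; have x_pos : x \in Num.pos by rewrite posrE.
set y := ln x; have xE : x = expR y by rewrite /y lnK.
have -> : powR x t = expR (t * y) by rewrite xE -expRM mulrC.
set e := expR (t * y); have e_gt0 : 0 < e by exact: expR_gt0.
pose u := e * (expR ((1 - t) * y) - (1 + (1 - t) * y)).
pose v := e * (expR (- (t * y)) - (1 - t * y)).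
have splitE : t * x + (1 - t) - e = t * u + (1 - t) * v.
  have e_inv : e * expR (- (t * y)) = 1 by rewrite expRxMexpNx_1.
  have e_mul : e * expR ((1 - t) * y) = x by rewrite -expRD xE; congr expR; ring.
  rewrite /u /v !mulrBr e_mul e_inv; ring.
have u_ge0 : 0 <= u by rewrite mulr_ge0 ?subr_ge0 ?expR_ge1Dx // ltW.
have v_ge0 : 0 <= v by rewrite mulr_ge0 ?subr_ge0 -?addrA ?expR_ge1Dx // ltW.
rewrite splitE; split; first by nra.
split=> [sum0|x1]; last first.
  have y0 : y = 0 by rewrite /y x1 ln1.
  by rewrite /u /v y0 !mulr0 oppr0 expR0; ring.
apply/eqP; apply: contraT; rewrite -ln_eq0 // -/y => y_neq0.
have : (1 - t) * y != 0 by rewrite mulf_eq0 negb_or y_neq0 andbT; lra.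
move=> /expR_gt1Dx u_gt; have : 0 < u by rewrite mulr_gt0 // subr_gt0.
by nra.
Qed.

Lemma zero_min_at1_Dtau t : 0 < t < 1 -> zero_min_at1
  (fun x => (t * (t - 1))^-1 * powR x t + (1 - t)^-1 * x + t^-1).
Proof.
move=> t01; have /andP[t_gt0 t_lt1] := t01.
have c_gt0 : 0 < (t * (1 - t))^-1 by rewrite invr_gt0 mulr_gt0 // subr_gt0.
have t1_neq0 : 1 - t != 0 by rewrite subr_eq0 eq_sym lt_eqF.
have -> : (fun x => (t * (t - 1))^-1 * powR x t + (1 - t)^-1 * x + t^-1)
        = (fun x => (t * (1 - t))^-1 * (t * x + (1 - t) - powR x t)).
  apply/funext => x; rewrite -opprB mulrN invrN; field.
  by rewrite t1_neq0 gt_eqF.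
exact: zero_min_at1_scale c_gt0 (zero_min_at1_powR t01).
Qed.

Lemma sum_zero_min_at1 n f (d : 'I_n -> R) : zero_min_at1 f ->
  (forall i, 0 < d i) ->
  0 <= \sum_i f (d i) /\ (\sum_i f (d i) = 0 <-> forall i, d i = 1).
Proof.
move=> f_min d_gt0.
have f_ge0 i : true -> 0 <= f (d i) by move=> _; case: (f_min _ (d_gt0 i)).
split; first exact: sumr_ge0.
split=> [/(psumr_eq0P f_ge0) fd0 i|d1].
  by apply/(f_min _ (d_gt0 i)).2/fd0.
by apply: big1 => i _; apply/(f_min _ (d_gt0 i)).2.
Qed.

End ScalarGenerators.

Section QuadraticForms.
Variable R : realType.
Variable n : nat.
Implicit Types (S T : 'M[R]_n) (a b c u v : 'cV[R]_n).

Definition bilin S a b : R := (a^T *m S *m b) 0 0.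

Lemma bilinDl S a b c : bilin S (a + b) c = bilin S a c + bilin S b c.
Proof. by rewrite /bilin linearD /= !mulmxDl mxE. Qed.

Lemma bilinDr S a b c : bilin S c (a + b) = bilin S c a + bilin S c b.
Proof. by rewrite /bilin !mulmxDr mxE. Qed.

Lemma bilinNl S a c : bilin S (- a) c = - bilin S a c.
Proof. by rewrite /bilin linearN /= !mulNmx mxE. Qed.

Lemma bilinNr S a c : bilin S c (- a) = - bilin S c a.
Proof. by rewrite /bilin !mulmxN mxE. Qed.

Lemma bilin0 S : bilin S 0 0 = 0.
Proof. by rewrite /bilin mulmx0 mxE. Qed.

Lemma bilinC S a b : S^T = S -> bilin S a b = bilin S b a.
Proof.
move=> symS; rewrite /bilin.
have -> : (a^T *m S *m b) 0 0 = (a^T *m S *m b)^T 0 0 by rewrite [RHS]mxE.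
by rewrite !trmx_mul trmxK symS mulmxA.
Qed.

Lemma bilin_delta S i j : bilin S (delta_mx i 0) (delta_mx j 0) = S i j.
Proof. by rewrite /bilin trmx_delta -rowE -colE !mxE. Qed.

Lemma bilin_second_diff S c u :
  bilin S (c + u) (c + u) + bilin S (c - u) (c - u) - 2 * bilin S c c
  = 2 * bilin S u u.
Proof. rewrite !(bilinDl, bilinDr, bilinNl, bilinNr); ring. Qed.

Lemma sym_bilin_inj S T : S^T = S -> T^T = T ->
  (forall u, bilin S u u = bilin T u u) -> S = T.
Proof.
move=> symS symT quadE; apply/matrixP => i j; rewrite -!bilin_delta.
have polar U a b : U^T = U ->
    bilin U (a + b) (a + b) = bilin U a a + 2 * bilin U a b + bilin U b b.
  by move=> symU; rewrite !(bilinDl, bilinDr) (bilinC a b symU); ring.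
have := polar _ (delta_mx i 0) (delta_mx j 0) symS.
by have := polar _ (delta_mx i 0) (delta_mx j 0) symT; rewrite !quadE; lra.
Qed.

Lemma posdef_bilin_ge0 S u : posdef S -> 0 <= bilin S u u.
Proof.
move=> [_ posS]; have [->|un0] := eqVneq u 0; first by rewrite bilin0.
exact/ltW/posS.
Qed.

Lemma posdef_bilin_eq0 S u : posdef S -> (bilin S u u = 0 <-> u = 0).
Proof.
move=> [_ posS]; split=> [Su0|->]; last exact: bilin0.
by apply/eqP; apply: contraT => /posS; rewrite -/(bilin S u u) Su0 ltxx.
Qed.

End QuadraticForms.

Section Gaussian.
Variable R : realType.

Lemma gauss_pdf_inj q (mt m : 'cV[R]_q) (Kt K : 'M[R]_q) :
  posdef Kt -> posdef K -> gauss_pdf mt Kt = gauss_pdf m K -> mt = m /\ Kt = K.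
Proof.
move=> posKt posK pdfE.
pose norm_const (C : 'M[R]_q) := Num.sqrt ((2 * pi) ^+ q * \det C).
have norm_gt0 C : posdef C -> 0 < norm_const C.
  move=> /posdef_det_gt0 ?.
  by rewrite sqrtr_gt0 mulr_gt0 ?exprn_gt0 ?mulr_gt0 ?pi_gt0.
set St := invmx Kt; set S := invmx K.
pose c := ln (norm_const K) - ln (norm_const Kt).
have logE x : bilin St (x - mt) (x - mt) = bilin S (x - m) (x - m) + 2 * c.
  have := congr1 (fun g => ln (g x)) pdfE; rewrite /gauss_pdf /=.
  rewrite !ln_div ?posrE ?expR_gt0 ?norm_gt0 // !expRK.
  by rewrite /bilin /c /norm_const -/St -/S; lra.
have [symSt _] := posdef_inv posKt; have [symS _] := posdef_inv posK.
have SE : St = S.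
  apply: sym_bilin_inj => // u.
  have := bilin_second_diff St (- mt) u; have := bilin_second_diff S (- m) u.
  have := logE u; have := logE (- u); have := logE 0.
  rewrite !sub0r !(addrC u) !(addrC (- u)); lra.
have KE : Kt = K by rewrite -(invmxK Kt) -(invmxK K) -/St -/S SE.
split=> //; rewrite SE in logE.
have := logE mt; have := logE m.
rewrite !subrr bilin0 -opprB bilinNl bilinNr opprK => at_m at_mt.
apply/eqP; rewrite -subr_eq0; apply/eqP/(posdef_bilin_eq0 _ (posdef_inv posK)).
lra.
Qed.

End Gaussian.

Section DivergenceTraces.
Variable R : realType.
Variable n : nat.
Variables (A P : 'M[R]_n) (d : 'rV[R]_n).
Hypothesis Ad : eigdecomp A (P, d).
Hypothesis matfunAE :
  forall f, matfun f A = P *m diag_mx (map_mx f d) *m invmx P.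

Let Pu : P \in unitmx. Proof. by case: Ad. Qed.

Let mxtraceE : \tr A = \sum_i d 0 i.
Proof. by case: Ad => _ {1}->; rewrite mxtrace_conj_diag. Qed.

Lemma mxtrace_Dtau0 :
  \tr (- mlog A + A - 1%:M) = \sum_i (d 0 i - ln (d 0 i) - 1).
Proof.
rewrite /mlog matfunAE !raddfD !raddfN /= mxtrace_conj_diag_map // mxtraceE.
by rewrite mxtrace1 !sumrB sumr_const card_ord; ring.
Qed.

Lemma mxtrace_Dtau t (B : 'M[R]_n) : \tr B = \tr A ->
  \tr ((t * (t - 1))^-1 *: mpow t A + (1 - t)^-1 *: B + t^-1 *: 1%:M)
  = \sum_i ((t * (t - 1))^-1 * powR (d 0 i) t + (1 - t)^-1 * d 0 i + t^-1).
Proof.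
move=> trB; rewrite /mpow matfunAE !raddfD /= !mxtraceZ trB mxtraceE mxtrace1.
rewrite mxtrace_conj_diag_map // !big_split /= -!mulr_sumr sumr_const card_ord.
by rewrite mulr_natr.
Qed.

Lemma mxtrace_Dtau1 (B : 'M[R]_n) : \tr B = \tr A ->
  \tr (A *m mlog A - B + 1%:M) = \sum_i (d 0 i * ln (d 0 i) - d 0 i + 1).
Proof.
move=> trB; have [_ AE] := Ad.
rewrite /mlog matfunAE [in A *m _]AE !mulmxA mulmxKV // -(mulmxA P) mulmx_diag.
rewrite !raddfD raddfN /= trB mxtraceE mxtrace_conj_diag // mxtrace1.
rewrite !big_split /= sumrN sumr_const card_ord.
by congr (_ - _ + _); apply: eq_bigr => i _; rewrite !mxE.
Qed.

End DivergenceTraces.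

Section Divergence.
Variable R : realType.

Lemma divergence_ge0_eq0 n c a f (d : 'I_n -> R) (P Q : Prop) :
  0 < c -> 0 <= a -> (a = 0 <-> P) -> zero_min_at1 f -> (forall i, 0 < d i) ->
  ((forall i, d i = 1) <-> Q) ->
  0 <= c * a + \sum_i f (d i) /\ (c * a + \sum_i f (d i) = 0 <-> P /\ Q).
Proof.
move=> c_gt0 a_ge0 aE f_min d_gt0 dE.
have [s_ge0 sE] := sum_zero_min_at1 f_min d_gt0.
have ca_ge0 : 0 <= c * a by rewrite mulr_ge0 // ltW.
split; first exact: addr_ge0.
rewrite -aE -dE -sE; split=> [/eqP|[-> ->]]; last by rewrite mulr0 addr0.
by rewrite paddr_eq0 // mulf_eq0 gt_eqF //= => /andP[/eqP ? /eqP ?].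
Qed.

Lemma fin_ge0_eq0 (x : R) (Q : Prop) : 0 <= x /\ (x = 0 <-> Q) ->
  (0%:E <= x%:E)%E /\ (x%:E = 0%:E <-> Q).
Proof.
by move=> [x_ge0 xE]; rewrite lee_fin -xE; split=> //; split=> [[]|->].
Qed.

End Divergence.

Section DivergenceRegimes.
Variables (R : realType) (q : nat) (mt m : 'cV[R]_q) (Kt K L : 'M[R]_q).
Hypotheses (posKt : posdef Kt) (posK : posdef K) (KE : K = L *m L^T).

Local Notation A := (Kt *m invmx K).
Local Notation M := (invmx L *m Kt *m invmx L^T).
Local Notation nrm := (bilin (invmx K) (mt - m) (mt - m)).

Let Lu : L \in unitmx.
Proof. by move: (posdef_unit posK); rewrite KE unitmx_mul => /andP[]. Qed.

Lemma ratio_conj_whitened : A = L *m M *m invmx L.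
Proof. by rewrite KE invmx_mul ?unitmx_tr // !mulmxA mulmxV // mul1mx. Qed.

Lemma posdef_whitened : posdef M.
Proof.
rewrite -[invmx L]trmxK trmx_inv.
by apply: posdef_congr; rewrite ?unitmx_inv ?unitmx_tr.
Qed.

Let M_spectral : exists2 Pd, eigdecomp M Pd &
  forall f, matfun f M = Pd.1 *m diag_mx (map_mx f Pd.2) *m invmx Pd.1.
Proof. exact/matfunE/sym_eigdecomp/(proj1 posdef_whitened). Qed.

Let A_eigdecomp P d : eigdecomp M (P, d) -> eigdecomp A (L *m P, d).
Proof. by rewrite ratio_conj_whitened; exact: eigdecomp_conj. Qed.

Let mxtrace_ratio : \tr A = \tr M.
Proof. by rewrite ratio_conj_whitened mxtrace_conj. Qed.

Let nrm_ge0 : 0 <= nrm.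
Proof. exact/posdef_bilin_ge0/posdef_inv. Qed.

Let nrmE : nrm = 0 <-> mt = m.
Proof.
rewrite (posdef_bilin_eq0 _ (posdef_inv posK)).
by split=> [/eqP|->]; rewrite ?subr_eq0 ?subrr // => /eqP.
Qed.

Lemma Dtau0_ge0_eq0 : 0 <= nrm + \tr (- mlog A + A - 1%:M) /\
  (nrm + \tr (- mlog A + A - 1%:M) = 0 <-> mt = m /\ Kt = K).
Proof.
have [[P d] /= Md _] := M_spectral.
have [[P' d'] /= Ad Af] := matfunE (ex_intro _ _ (A_eigdecomp Md)).
rewrite -[nrm]mul1r (mxtrace_Dtau0 Ad Af).
exact: (divergence_ge0_eq0 ltr01 nrm_ge0 nrmE (@zero_min_at1_ln R)
  (eigdecomp_ratio_gt0 posKt posK Ad) (eigdecomp_ratio_eq1 posK Ad)).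
Qed.

Lemma Dtau_ge0_eq0 tau : 0 < tau < 1 ->
  let D := (1 - tau)^-1 * nrm + \tr ((tau * (tau - 1))^-1 *: mpow tau M
             + (1 - tau)^-1 *: A + tau^-1 *: 1%:M) in
  0 <= D /\ (D = 0 <-> mt = m /\ Kt = K).
Proof.
move=> t01 /=; have [[P d] /= Md Mf] := M_spectral; have Ad := A_eigdecomp Md.
have /andP[_ t_lt1] := t01.
have c_gt0 : 0 < (1 - tau)^-1 by rewrite invr_gt0 subr_gt0.
rewrite (mxtrace_Dtau Md Mf _ mxtrace_ratio).
exact: divergence_ge0_eq0 c_gt0 nrm_ge0 nrmE (zero_min_at1_Dtau t01)
  (eigdecomp_ratio_gt0 posKt posK Ad) (eigdecomp_ratio_eq1 posK Ad).
Qed.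

Lemma Dtau1_ge0_eq0 : 0 <= \tr (M *m mlog M - A + 1%:M) /\
  (\tr (M *m mlog M - A + 1%:M) = 0 <-> Kt = K).
Proof.
have [[P d] /= Md Mf] := M_spectral; have Ad := A_eigdecomp Md.
rewrite (mxtrace_Dtau1 Md Mf mxtrace_ratio) -(eigdecomp_ratio_eq1 posK Ad).
exact: sum_zero_min_at1 (@zero_min_at1_xlnx R)
  (eigdecomp_ratio_gt0 posKt posK Ad).
Qed.

End DivergenceRegimes.

Theorem proposition1 (R : realType) (q : nat) (tau : R)
  (mt m : 'cV[R]_q) (Kt K L : 'M[R]_q) :
  0 <= tau <= 1 -> posdef Kt -> posdef K -> K = L *m L^T ->
  (0%:E <= Dtau tau mt m Kt K L)%E /\
  (Dtau tau mt m Kt K L = 0%:E <-> gauss_pdf mt Kt = gauss_pdf m K).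
Proof.
(* [Dtau] treats every [tau >= 1] as [tau = 1]. *)
move=> /andP[t_ge0 _] posKt posK KE.
suff [D_ge0 DE] : (0%:E <= Dtau tau mt m Kt K L)%E /\
    (Dtau tau mt m Kt K L = 0%:E <-> mt = m /\ Kt = K).
  split=> //; split=> [/DE[-> ->] // | pdfE].
  by apply/DE; exact: gauss_pdf_inj pdfE.
rewrite /Dtau /= -/(bilin _ (mt - m) (mt - m)).
have [_|t_neq0] := eqVneq tau 0.
  exact/fin_ge0_eq0/(Dtau0_ge0_eq0 _ _ posKt posK KE).
have [t_lt1|_] := ltP tau 1.
  apply/fin_ge0_eq0/(Dtau_ge0_eq0 _ _ posKt posK KE).
  by rewrite lt_def t_neq0 t_ge0.
have [dm0|dm_neq0] := eqVneq (mt - m) 0; last first.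
  split=> [|]; first exact: leey.
  by split=> // -[mE _]; move: dm_neq0; rewrite mE subrr eqxx.
have mE : mt = m by apply/eqP; rewrite -subr_eq0 dm0.
have [tr_ge0 trE] := Dtau1_ge0_eq0 posKt posK KE.
by apply: fin_ge0_eq0; split=> //; split=> [/trE|[_ /trE]].
Qed.
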